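(* Let $G=(U,V,E)$ be a bipartite graph with $|U|=|V|=N$ in which every vertex of $U$ has at least one neighbor, and run the matching algorithm on $G$. Let $i\ge 0$ be an iteration index at which $|M(i)|<N$, let $l$ be an integer, and let $v_0\in D_l(i)$ and $u\in U$ with $(u,v_0)\in M(i)$. Then $n_u\subseteq D_{l-1}(i)$.
   Context: Matching algorithm. For $u\in U$ let $n_u=\{v\in V:(u,v)\in E\}$. The algorithm maintains a matching $M\subseteq E$ (initially empty) and an integer value $h_v$ for each $v\in V$ (initially $0$). A vertex is free if no edge of $M$ is incident to it. One iteration: choose any free $u\in U$ (arbitrary choice); choose $j\in\arg\min_{v\in n_u}h_v$ (ties broken arbitrarily); if some $u_{\rm old}\in U$ has $(u_{\rm old},j)\in M$, remove $(u_{\rm old},j)$ from $M$ (so $u_{\rm old}$ becomes free); add $(u,j)$ to $M$; increase $h_j$ by $1$. Iterations are repeated while $|M|<N$ and the algorithm terminates when $|M|=N$. $M(i)$ and $h_v(i)$ denote the matching and the values after the $i$-th iteration. For an integer $l$, $D_l(i)=\{v\in V: h_v(i)\ge l\}$. *)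

From mathcomp Require Import all_boot all_order all_algebra.
Set Implicit Arguments. Unset Strict Implicit. Unset Printing Implicit Defensive.

Definition freeU (U V : finType) (M : {set U * V}) (u : U) : bool :=
  [forall v, (u, v) \notin M].

Definition alg_step (U V : finType) (E : U -> V -> bool)
  (M : {set U * V}) (h : V -> nat) (M' : {set U * V}) (h' : V -> nat) : Prop :=
  exists u : U, freeU M u /\
  exists j : V, E u j /\ (forall v, E u v -> h j <= h v) /\
    M' = (u, j) |: [set p in M | p.2 != j] /\
    (forall v, h' v = if v == j then (h v).+1 else h v).

Definition D (V : finType) (h : V -> nat) (l : int) : {set V} :=
  [set v | (l <= (h v)%:Z)%R].

From mathcomp Require Import all_boot all_order all_algebra.
From mathcomp Require Import zify.

Set Implicit Arguments.
Unset Strict Implicit.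

(* Call a pair (M, h) "tight" for E when every matched edge
   (u, w) of M satisfies h_w <= h_v + 1 for every neighbour v of u.  The empty
   matching is trivially tight, and one iteration of the algorithm preserves
   tightness: values only increase, so old matched edges stay tight except
   when their endpoint j is re-matched, and the new edge (u, j) is tight
   because h_j was minimal on n_u before being increased by one.  Hence every
   state of a run is tight; the theorem is then tightness read at step i:
   if l <= h_{v0} and (u, v0) is matched, every neighbour v of u has
   l - 1 <= h_v. *)

Section Tightness.

Variables (U V : finType) (E : U -> V -> bool).

Definition tight (M : {set U * V}) (h : V -> nat) : Prop :=
  forall u w v, (u, w) \in M -> E u v -> h w <= (h v).+1.

Lemma tight_set0 (h : V -> nat) : tight set0 h.
Proof. by move=> u w v; rewrite inE. Qed.

Lemma alg_step_mono M h M' h' :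
  alg_step E M h M' h' -> forall x, h x <= h' x.
Proof.
by move=> [_ [_ [j [_ [_ [_ eh']]]]]] x; rewrite eh'; case: (x == j).
Qed.

Lemma alg_step_tight M h M' h' :
  alg_step E M h M' h' -> tight M h -> tight M' h'.
Proof.
move=> step tM; have mono := alg_step_mono step.
case: step => u1 [_ [j [_ [hmin [eM eh']]]]] u w v.
rewrite eM !inE => /orP [/eqP [-> ->] | /andP [Muw /= w_neq_j]] Euv.
- (* the new edge (u, j): h_j was minimal on n_u *)
  by rewrite eh' eqxx ltnS; exact: leq_trans (hmin _ Euv) (mono v).
-
  rewrite eh' (negbTE w_neq_j).
  by apply: leq_trans (tM _ _ _ Muw Euv) _; rewrite ltnS.
Qed.

Lemma run_tight (M : nat -> {set U * V}) (h : nat -> V -> nat) (i : nat) :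
  M 0 = set0 ->
  (forall k, k < i -> alg_step E (M k) (h k) (M k.+1) (h k.+1)) ->
  forall k, k <= i -> tight (M k) (h k).
Proof.
move=> M0 run; elim=> [|k IH] lt_ki; first by rewrite M0; exact: tight_set0.
exact: alg_step_tight (run k lt_ki) (IH (ltnW lt_ki)).
Qed.

End Tightness.

(* M k, h k : matching and values after the k-th iteration of a run. *)
Theorem mainTheorem5 (U V : finType) (N : nat) (E : U -> V -> bool)
  (hU : #|U| = N) (hV : #|V| = N)
  (hdeg : forall u : U, exists v : V, E u v)
  (M : nat -> {set U * V}) (h : nat -> V -> nat)
  (hM0 : M 0 = set0) (hh0 : forall v, h 0 v = 0)
  (i : nat)
  (hrun : forall k, k < i -> #|M k| < N /\ alg_step E (M k) (h k) (M k.+1) (h k.+1))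
  (hi : #|M i| < N)
  (l : int) (v0 : V) (u : U)
  (hv0 : v0 \in D (h i) l) (huv0 : (u, v0) \in M i) :
  forall v, E u v -> v \in D (h i) (l - 1)%R.
Proof.
move=> v Euv.
have tight_i : tight E (M i) (h i).
  exact: run_tight hM0 (fun k lt_ki => (hrun k lt_ki).2) i (leqnn i).
have := tight_i u v0 v huv0 Euv.
move: hv0; rewrite /D !inE; lia.
Qed.
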